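(* Let $1\le k\le n$. For every state $q\in S_k$, there is a wait-free implementation of a consensus object for $k$ processes from one token object $T_q$ (the ERC20 token object initialized in state $q$) together with atomic read/write registers. Consequently $\mathcal{CN}(T_{S_k})\ge k$.
   Context: Asynchronous shared-memory model with crash failures; processes are sequential and communicate through shared objects; an implementation is wait-free if every operation invoked by a correct process terminates regardless of crashes of other processes. A consensus object offers a single-shot operation $\mathrm{propose}(v)$ returning a decided value; it must satisfy termination (wait-freedom), validity (the decided value was proposed by some process) and agreement (all processes decide the same value). The consensus number $\mathcal{CN}(O)$ of an object type $O$ is the largest $m$ such that consensus among $m$ processes can be wait-free implemented from atomic registers and objects of type $O$ (infinite if there is no largest). For a set of states $Q'$, $T_{Q'}$ denotes the token object initialized in some state of $Q'$; $\mathcal{CN}(T_{Q'})\ge k$ means that from any such initial state consensus among $k$ processes can be implemented. ERC20 token object. There are $n$ processes $\Pi=\{p_1,\dots,p_n\}$ and $n$ accounts $\mathcal A=\{a_1,\dots,a_n\}$, with owner bijection $\omega(a_i)=p_i$; $a_p$ denotes the account owned by $p$. States are pairs $q=(\beta,\alpha)$ with balances $\beta:\mathcal A\to\mathbb N$ and allowances $\alpha:\mathcal A\times\Pi\to\mathbb N$. Operations invoked by process $p$ (sequential specification): $\mathrm{transfer}(a_d,v)$: if $\beta(a_p)\ge v$, move $v$ from $a_p$ to $a_d$ and return true, else leave the state unchanged and return false; $\mathrm{approve}(\bar p,v)$: set $\alpha(a_p,\bar p)=v$ (all else unchanged), return true; $\mathrm{transferFrom}(a_s,a_d,v)$: if $\beta(a_s)\ge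 v$ and $\alpha(a_s,p)\ge v$, decrease $\beta(a_s)$ and $\alpha(a_s,p)$ by $v$, increase $\beta(a_d)$ by $v$, return true, else leave the state unchanged and return false; $\mathrm{balanceOf}(a)$ returns $\beta(a)$; $\mathrm{totalSupply}$ returns $\sum_a\beta(a)$; $\mathrm{allowances}(a,\bar p)$ returns $\alpha(a,\bar p)$ (read-only). $T_q$ is this object initialized in state $q$. Enabled spenders: for $q=(\beta,\alpha)$ and $a\in\mathcal A$, $\sigma_q(a)=\{p\in\Pi: p=\omega(a)\ \lor\ \alpha(a,p)>0\}$, with the convention that if $\beta(a)=0$ then $\sigma_q(a)=\{\omega(a)\}$. Predicate $\mathrm{UT}(a,q)$ holds iff $\beta(a)>0$ and (either $|\sigma_q(a)|\le 2$, or for all $p_i,p_j\in\sigma_q(a)\setminus\{\omega(a)\}$: $\alpha(a,p_i)+\alpha(a,p_j)>\beta(a)$). The set of $k$-synchronization states is $S_k=\{q: \exists a\in\mathcal A,\ |\sigma_q(a)|=k \land \mathrm{UT}(a,q)\}$. *)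

From mathcomp Require Import all_boot.
Set Implicit Arguments.
Unset Strict Implicit.
Unset Printing Implicit Defensive.

(* ERC20 token object with n processes p_0..p_{n-1} and n accounts     *)
(* a_0..a_{n-1}; both indexed by 'I_n, with owner omega(a_i) = p_i.     *)

Record tstate (n : nat) := TState {
  bal : 'I_n -> nat;
  alw : 'I_n -> 'I_n -> nat
}.

Inductive tok_op (n : nat) :=
| Transfer of 'I_n & nat
| Approve of 'I_n & nat
| TransferFrom of 'I_n & 'I_n & nat
| BalanceOf of 'I_n
| TotalSupply
| Allowance of 'I_n & 'I_n.

Inductive tok_resp := RBool of bool | RNat of nat.

(* move v units from account s to account d (correct also when s = d,
   provided v <= b s) *)
Definition move n (b : 'I_n -> nat) (s d : 'I_n) (v : nat) : 'I_n -> nat :=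
  fun x => b x - (if x == s then v else 0) + (if x == d then v else 0).

Definition tok_apply n (p : 'I_n) (o : tok_op n) (q : tstate n)
  : tstate n * tok_resp :=
  match o with
  | Transfer d v =>
      if v <= bal q p then (TState (move (bal q) p d v) (alw q), RBool true)
      else (q, RBool false)
  | Approve pb v =>
      (TState (bal q) (fun a p' => if (a == p) && (p' == pb) then v
                                   else alw q a p'), RBool true)
  | TransferFrom s d v =>
      if (v <= bal q s) && (v <= alw q s p) then
        (TState (move (bal q) s d v)
                (fun a p' => if (a == s) && (p' == p) then alw q a p' - v
                             else alw q a p'), RBool true)
      else (q, RBool false)
  | BalanceOf a => (q, RNat (bal q a))
  | TotalSupply => (q, RNat (\sum_(a < n) bal q a))
  | Allowance a pb => (q, RNat (alw q a pb))
  end.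

(* Enabled spenders sigma_q(a) (owner of account a is process a). *)
Definition sigma n (q : tstate n) (a : 'I_n) : {set 'I_n} :=
  if bal q a == 0 then [set a]
  else [set p | (p == a) || (0 < alw q a p)].

Definition UT n (a : 'I_n) (q : tstate n) : bool :=
  (0 < bal q a) &&
  ((#|sigma q a| <= 2) ||
   [forall pi in sigma q a :\ a, forall pj in sigma q a :\ a,
      bal q a < alw q a pi + alw q a pj]).

Definition in_Sk n (k : nat) (q : tstate n) : bool :=
  [exists a : 'I_n, (#|sigma q a| == k) && UT a q].

(* Each consensus process i acts on the token as process ident i.      *)

Inductive action (n : nat) (R : Type) :=
| Decide of nat
| TokInv of tok_op n
| RegRead of nat
| RegWrite of nat & R.

Inductive response (R : Type) := TokResp of tok_resp | RegVal of R | Ack.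

Record protocol (n k : nat) (L R : Type) := Protocol {
  ident : 'I_k -> 'I_n;
  reg0 : R;
  init : 'I_k -> nat -> L;
  act : L -> action n R;
  trans : L -> response R -> L
}.

Record config (n k : nat) (L R : Type) := Config {
  locs : 'I_k -> L;
  tok : tstate n;
  regs : nat -> R
}.

Definition upd (k : nat) (L : Type) (f : 'I_k -> L) (i : 'I_k) (y : L) :=
  fun j => if j == i then y else f j.

Definition step n k L R (P : protocol n k L R) (i : 'I_k)
  (c : config n k L R) : config n k L R :=
  let l := locs c i in
  match act P l with
  | Decide _ => c
  | TokInv o =>
      let qr := tok_apply (ident P i) o (tok c) in
      Config (upd (locs c) i (trans P l (TokResp R qr.2))) qr.1 (regs c)
  | RegRead r =>
      Config (upd (locs c) i (trans P l (RegVal (regs c r)))) (tok c) (regs c)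
  | RegWrite r x =>
      Config (upd (locs c) i (trans P l (Ack R))) (tok c)
             (fun r' => if r' == r then x else regs c r')
  end.

(* Execution under schedule s (s t = process taking step t); processes
   that appear only finitely often in s are the crashed ones. *)
Fixpoint exec n k L R (P : protocol n k L R) (q : tstate n)
  (inp : 'I_k -> nat) (s : nat -> 'I_k) (t : nat) : config n k L R :=
  match t with
  | 0 => Config (fun i => init P i (inp i)) q (fun _ => reg0 P)
  | t'.+1 => step P (s t') (exec P q inp s t')
  end.

Definition decided n k L R (P : protocol n k L R) (c : config n k L R)
  (i : 'I_k) (v : nat) : Prop :=
  act P (locs c i) = Decide n R v.

Definition wf_consensus n k L R (q : tstate n) (P : protocol n k L R) : Prop :=
  injective (ident P) /\
  forall (inp : 'I_k -> nat) (s : nat -> 'I_k),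
    (forall i j t t' v w,
        decided P (exec P q inp s t) i v ->
        decided P (exec P q inp s t') j w -> v = w) /\
    (forall i t v, decided P (exec P q inp s t) i v -> exists j, v = inp j) /\
    (forall i, (forall t, exists2 t', t <= t' & s t' = i) ->
       exists t v, decided P (exec P q inp s t) i v).

Definition consensus_implementable n (k : nat) (q : tstate n) : Prop :=
  exists (L R : Type) (P : protocol n k L R), wf_consensus q P.

From mathcomp Require Import all_boot zify.
Set Implicit Arguments.
Unset Strict Implicit.
Unset Printing Implicit Defensive.

(* Let q be in S_k, witnessed by an account a with |sigma_q(a)| = k and
   UT(a, q).  The k processes are identified with the k enabled spenders of a
   (the owner included).  Each process
     1. announces its input in the register indexed by its identity;
     2. tries to drain a: the owner transfers the whole balance, a spender
        transfers min(allowance, balance) out of a;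
     3. scans the allowances alpha(a, p): the first p whose allowance dropped
        is the winner; if none dropped, the owner a is the winner;
     4. decides the value announced by the winner.
   UT(a, q) guarantees that the first drain succeeds and every later drain
   fails (Section Drain), so the winner is well defined and never changes.
   Agreement and validity follow from an invariant over executions
   (Section Protocol), wait-freedom from a potential that decreases at every
   step of an undecided process. *)

Section Drain.
Variables (n : nat) (q : tstate n) (a : 'I_n).

Definition dest : 'I_n := odflt a [pick x | x != a].

Definition drain_op (p : 'I_n) : tok_op n :=
  if p == a then Transfer dest (bal q a)
  else TransferFrom a dest (minn (alw q a p) (bal q a)).

Definition drained (p : 'I_n) : tstate n := (tok_apply p (drain_op p) q).1.

Definition first_drop (l : seq 'I_n) (T : tstate n) : 'I_n :=
  foldr (fun p r => if alw T a p < alw q a p then p else r) a l.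

Lemma dest_neq (p : 'I_n) : p != a -> dest != a.
Proof.
move=> pa; rewrite /dest; case: pickP => [x hx|/(_ p)] //=; by rewrite pa.
Qed.

Lemma drain_op_owner : drain_op a = Transfer dest (bal q a).
Proof. by rewrite /drain_op eqxx. Qed.

Lemma drain_op_spender p : p != a ->
  drain_op p = TransferFrom a dest (minn (alw q a p) (bal q a)).
Proof. by move=> pa; rewrite /drain_op (negbTE pa). Qed.

Lemma first_drop_none l T :
  (forall x, alw T a x = alw q a x) -> first_drop l T = a.
Proof. by move=> hT; elim: l => //= p l ->; rewrite hT ltnn. Qed.

Lemma first_drop_one l T p : p \in l ->
  (forall x, (alw T a x < alw q a x) = (x == p)) -> first_drop l T = p.
Proof.
move=> pl hT; elim: l pl => //= x l IH; rewrite in_cons hT.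
by case: (eqVneq x p) => [->|_].
Qed.

Hypothesis bal_pos : 0 < bal q a.

(* A successful drain by p is recognised by scanning the allowances on a:
   the owner's transfer touches no allowance, a spender's transferFrom
   lowers exactly its own. *)
Lemma drained_identifies p :
  (p != a -> 0 < alw q a p) -> first_drop (enum 'I_n) (drained p) = p.
Proof.
move=> p_enabled; rewrite /drained.
have [->|pa] := eqVneq p a.
  by rewrite drain_op_owner /= leqnn; apply: first_drop_none.
rewrite drain_op_spender //= geq_minl geq_minr /=.
apply: first_drop_one; first by rewrite mem_enum.
move=> x /=; rewrite eqxx /=; have [->|_] := eqVneq x p; last by rewrite ltnn.
have := p_enabled pa; lia.
Qed.

Lemma drain_twice p p' :
  (p != a -> 0 < alw q a p) -> (p' != a -> 0 < alw q a p') -> p != p' ->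
  (p != a -> p' != a -> bal q a < alw q a p + alw q a p') ->
  (tok_apply p' (drain_op p') (drained p)).1 = drained p.
Proof.
move=> p_enabled p'_enabled pp' joint.
have dest_a : (a == dest) = false.
  apply/negbTE; rewrite eq_sym; have [ea|] := eqVneq p a; last exact: dest_neq.
  by apply: (@dest_neq p'); rewrite -ea eq_sym.
rewrite /drained.
have [ea|pa] := eqVneq p a.
  subst p; have p'a : p' != a by rewrite eq_sym.
  have := p'_enabled p'a.
  rewrite drain_op_owner (drain_op_spender p'a) /= leqnn /=.
  rewrite {1}/move eqxx dest_a subnn /=.
  by move=> pos; have -> : (minn (alw q a p') (bal q a) <= 0) = false by lia.
rewrite (drain_op_spender pa) /= geq_minl geq_minr /=.
have := p_enabled pa.
have [ea|p'a] := eqVneq p' a.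
  subst p'; rewrite drain_op_owner /= /move eqxx dest_a /= => pos.
  by have -> : (bal q a <= bal q a - minn (alw q a p) (bal q a) + 0) = false
    by lia.
rewrite (drain_op_spender p'a) /= {1}/move eqxx dest_a /= => pos.
have := joint pa p'a; have := p'_enabled p'a => pos' sum.
by have -> : (minn (alw q a p') (bal q a)
              <= bal q a - minn (alw q a p) (bal q a) + 0) = false by lia.
Qed.

End Drain.

Inductive phase (n : nat) :=
| Announce of 'I_n & nat
| Drain of 'I_n
| Scan of seq 'I_n          (* spenders whose allowance remains to inspect *)
| ReadWinner of 'I_n
| Done of nat.

Definition announced n (l : phase n) : bool :=
  if l is Announce _ _ then false else true.

Definition past_drain n (l : phase n) : bool :=
  match l with Announce _ _ | Drain _ => false | _ => true end.

Lemma past_drain_announced n (l : phase n) : past_drain l -> announced l.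
Proof. by case: l. Qed.

(* Point updates of the local states are handled by upd_same and upd_other. *)
Arguments upd : simpl never.

Lemma upd_same k L (f : 'I_k -> L) i y : upd f i y i = y.
Proof. by rewrite /upd eqxx. Qed.

Lemma upd_other k L (f : 'I_k -> L) i y j : j != i -> upd f i y j = f j.
Proof. by move=> ji; rewrite /upd (negbTE ji). Qed.

Section Protocol.
Variables (n k : nat) (q : tstate n) (a : 'I_n) (id : 'I_k -> 'I_n).

(* The synchronization setup: process i acts on the token as the enabled
   spender id i of the account a, and UT(a, q) holds for these spenders. *)
Hypothesis id_inj : injective id.
Hypothesis bal_pos : 0 < bal q a.
Hypothesis id_enabled : forall i, id i != a -> 0 < alw q a (id i).
Hypothesis id_joint : forall i j, i != j -> id i != a -> id j != a ->
  bal q a < alw q a (id i) + alw q a (id j).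

Definition pact (l : phase n) : action n nat :=
  match l with
  | Announce p x => RegWrite n (nat_of_ord p) x
  | Drain p => TokInv nat (drain_op q a p)
  | Scan [::] => RegRead n nat (nat_of_ord a)
  | Scan (p :: _) => TokInv nat (Allowance a p)
  | ReadWinner p => RegRead n nat (nat_of_ord p)
  | Done x => Decide n nat x
  end.

Definition ptrans (l : phase n) (r : response nat) : phase n :=
  match l with
  | Announce p _ => Drain p
  | Drain _ => Scan (enum 'I_n)
  | Scan [::] => if r is RegVal x then Done n x else Done n 0
  | Scan (p :: rs) =>
      if r is TokResp (RNat m) then
        (if m < alw q a p then ReadWinner p else Scan rs)
      else Scan rs
  | ReadWinner _ => if r is RegVal x then Done n x else Done n 0
  | Done x => Done n x
  end.

Definition proto : protocol n k (phase n) nat :=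
  @Protocol n k (phase n) nat id 0 (fun i x => Announce (id i) x) pact ptrans.

Definition tok_after (W : option 'I_k) : tstate n :=
  if W is Some w then drained q a (id w) else q.

Section Invariant.
Variable inp : 'I_k -> nat.

(* What process i knows in local state l, given the winner W and the
   current token state T: anything past the drain already points to W. *)
Definition phase_inv (W : option 'I_k) (T : tstate n) (l : phase n)
    (i : 'I_k) : Prop :=
  match l with
  | Announce p x => p = id i /\ x = inp i
  | Drain p => p = id i
  | Scan rs => exists2 w, W = Some w & first_drop q a rs T = id w
  | ReadWinner p => exists2 w, W = Some w & p = id w
  | Done x => exists2 w, W = Some w & x = inp w
  end.

Definition Inv (c : config n k (phase n) nat) (W : option 'I_k) : Prop :=
  [/\ tok c = tok_after W,
      (forall j, phase_inv W (tok c) (locs c j) j),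
      (forall w, W = Some w -> past_drain (locs c w)) &
      (forall j, announced (locs c j) -> regs c (id j) = inp j)].

Lemma Inv_init : Inv (Config (fun i => Announce (id i) (inp i)) q
                             (fun _ => 0)) None.
Proof. by split. Qed.

Lemma Inv_local c W i l' :
  Inv c W -> announced (locs c i) -> past_drain l' ->
  phase_inv W (tok c) l' i ->
  Inv (Config (upd (locs c) i l') (tok c) (regs c)) W.
Proof.
move=> [htok hloc hwin hreg] ann_i past' inv'; split => //=.
- by move=> j; have [->|ji] := eqVneq j i; rewrite ?upd_same ?upd_other.
- move=> w hw; have [->|wi] := eqVneq w i; first by rewrite upd_same.
  by rewrite upd_other //; apply: hwin.
- move=> j; have [->|ji] := eqVneq j i; first by move=> _; apply: hreg.
  by rewrite upd_other //; apply: hreg.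
Qed.

Lemma Inv_announce c W i p x :
  Inv c W -> locs c i = Announce p x -> Inv (step proto i c) W.
Proof.
move=> [htok hloc hwin hreg] Ei; rewrite /step /= Ei /=.
have [-> ->] : p = id i /\ x = inp i by have := hloc i; rewrite Ei.
split => //=.
- by move=> j; have [->|ji] := eqVneq j i; rewrite ?upd_same ?upd_other.
- move=> w hw; have := hwin w hw.
  by have [->|wi] := eqVneq w i; [rewrite Ei | rewrite upd_other].
- move=> j; have [->|ji] := eqVneq j i; first by rewrite eqxx.
  rewrite (inj_eq val_inj) (inj_eq id_inj) (negbTE ji) upd_other //.
  exact: hreg.
Qed.

(* The drain step: the first drainer becomes the winner, later drains are
   no-ops on the token. *)
Lemma Inv_drain c W i p :
  Inv c W -> locs c i = Drain p -> exists W', Inv (step proto i c) W'.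
Proof.
move=> [htok hloc hwin hreg] Ei; rewrite /step /= Ei /=.
have p_id : p = id i by have := hloc i; rewrite Ei.
have reg_i : regs c (id i) = inp i by apply: hreg; rewrite Ei.
case: W htok hloc hwin => [w|] htok hloc hwin.
- have wi : w != i by apply/eqP => ewi; have := hwin w erefl; rewrite ewi Ei.
  have tok_same : (tok_apply (id i) (drain_op q a p) (tok c)).1 = tok c.
    rewrite htok p_id /=; apply: drain_twice => //; try exact: id_enabled.
      by rewrite (inj_eq id_inj).
    exact: id_joint.
  exists (Some w); split => //=; rewrite ?tok_same //.
  + move=> j; have [->|ji] := eqVneq j i; last by rewrite upd_other //; apply: hloc.
    rewrite upd_same; exists w => //.
    by rewrite htok drained_identifies //; apply: id_enabled.
  + by move=> w' [<-]; rewrite upd_other //; apply: hwin.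
  + move=> j; have [->|ji] := eqVneq j i; first by move=> _; exact: reg_i.
    by rewrite upd_other //; apply: hreg.
- exists (Some i); split => /=; rewrite ?htok ?p_id //.
  + move=> j; have [->|ji] := eqVneq j i.
      rewrite upd_same; exists i => //.
      by rewrite drained_identifies //; apply: id_enabled.
    by rewrite upd_other //; have := hloc j; case: (locs c j) => //= [?|?|?] [].
  + by move=> w' [<-]; rewrite upd_same.
  + move=> j; have [->|ji] := eqVneq j i; first by move=> _; exact: reg_i.
    by rewrite upd_other //; apply: hreg.
Qed.

Lemma Inv_step c W i : Inv c W -> exists W', Inv (step proto i c) W'.
Proof.
move=> hinv; have [_ hloc hwin hreg] := hinv; have hli := hloc i.
case Ei: (locs c i) hli => [p x|p|[|p rs]|p|x] hli.
- by exists W; apply: Inv_announce hinv Ei.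
- exact: Inv_drain hinv Ei.
- exists W; rewrite /step /= Ei /=; apply: Inv_local; rewrite ?Ei //.
  case: hli => w hw /= ->; exists w => //.
  by apply: hreg; apply: past_drain_announced; apply: hwin.
- exists W; rewrite /step /= Ei /=; apply: Inv_local; rewrite ?Ei //.
    by case: ifP.
  by case: hli => w hw /=; case: ifP => _ hfd; exists w.
- exists W; rewrite /step /= Ei /=; apply: Inv_local; rewrite ?Ei //.
  case: hli => w hw /= ->; exists w => //.
  by apply: hreg; apply: past_drain_announced; apply: hwin.
- by exists W; rewrite /step /= Ei.
Qed.

End Invariant.

(* Number of steps process i still needs before deciding. *)
Definition potential (l : phase n) : nat :=
  match l with
  | Announce _ _ => n + 4 | Drain _ => n + 3 | Scan rs => size rs + 2
  | ReadWinner _ => 1 | Done _ => 0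
  end.

Definition is_done (l : phase n) : bool := if l is Done _ then true else false.

Lemma pact_decide l v : pact l = Decide n nat v -> l = Done n v.
Proof. by case: l => //= [[|p rs]|x] // [->]. Qed.

Lemma step_other c i j : j != i -> locs (step proto j c) i = locs c i.
Proof.
move=> ji; rewrite /step /=.
by case: (pact (locs c j)) => //= *; rewrite upd_other // eq_sym.
Qed.

Lemma step_done c i j v :
  locs c i = Done n v -> locs (step proto j c) i = Done n v.
Proof.
move=> Ei; have [->|ji] := eqVneq j i; last by rewrite step_other.
by rewrite /step /= Ei.
Qed.

Lemma potential_step_self c i : ~~ is_done (locs c i) ->
  potential (locs (step proto i c) i) < potential (locs c i).
Proof.
rewrite /step /=; case: (locs c i) => [p x|p|[|p rs]|p|x] //= _;
  rewrite upd_same /=.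
- lia.
- rewrite size_enum_ord; lia.
- by case: (regs c a).
- by case: ifP => _ /=; lia.
- by case: (regs c p).
Qed.

Lemma potential_step c i j :
  potential (locs (step proto j c) i) <= potential (locs c i).
Proof.
have [->|ji] := eqVneq j i; last by rewrite step_other.
case: (boolP (is_done (locs c i))) => [|undone]; last first.
  exact/ltnW/potential_step_self.
by case Ei: (locs c i) => //= _; rewrite (step_done i Ei).
Qed.

Section Run.
Variables (inp : 'I_k -> nat) (s : nat -> 'I_k).

Let run (t : nat) := exec proto q inp s t.

Lemma done_persists i v t m :
  locs (run t) i = Done n v -> locs (run (t + m)) i = Done n v.
Proof.
move=> hv; elim: m => [|m IH]; first by rewrite addn0.
by rewrite addnS /run /=; apply: step_done.
Qed.

Lemma decided_done t i v : decided proto (run t) i v -> locs (run t) i = Done n v.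
Proof. exact: pact_decide. Qed.

Lemma potential_run_mono i t t' : t <= t' ->
  potential (locs (run t') i) <= potential (locs (run t) i).
Proof.
move/subnKC <-; elim: (t' - t) => [|m IH]; first by rewrite addn0.
by rewrite addnS /run /=; apply: leq_trans IH; apply: potential_step.
Qed.

(* A process scheduled infinitely often decides: between two of its steps
   its potential never increases, and each of its steps decreases it. *)
Lemma run_decides i : (forall t, exists2 t', t <= t' & s t' = i) ->
  exists t v, decided proto (run t) i v.
Proof.
move=> fair.
have done_dec t : is_done (locs (run t) i) -> exists v, decided proto (run t) i v.
  by rewrite /decided; case: (locs (run t) i) => // v _; exists v.
suff : forall m t, potential (locs (run t) i) <= m ->
         exists t0 v, decided proto (run t0) i v by move/(_ _ 0 (leqnn _)).
elim=> [|m IH] t.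
  case Ei: (locs (run t) i) => [p x|p|[|p rs]|p|v] /= hm; try lia.
  by exists t; apply: done_dec; rewrite Ei.
move=> hm; have [t' tt' st'] := fair t.
case: (boolP (is_done (locs (run t') i))) => [hd|undone].
  by exists t'; apply: done_dec.
apply: (IH t'.+1); rewrite /run /= st'.
have := potential_step_self undone.
have := potential_run_mono i tt'; move: hm; rewrite /run; lia.
Qed.

Lemma run_Inv t : exists W, Inv inp (run t) W.
Proof.
elim: t => [|t [W hW]]; first by exists None; apply: Inv_init.
exact: Inv_step (s t) hW.
Qed.

(* Every decided value is the input of the unique winner. *)
Lemma run_agreement i j t t' v w :
  decided proto (run t) i v -> decided proto (run t') j w -> v = w.
Proof.
move=> /decided_done hi /decided_done hj.
have := done_persists (maxn t t' - t) hi; rewrite subnKC ?leq_maxl // => hi'.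
have := done_persists (maxn t t' - t') hj; rewrite subnKC ?leq_maxr // => hj'.
have [W [_ hloc _ _]] := run_Inv (maxn t t').
have := hloc i; have := hloc j; rewrite hi' hj' /=.
by move=> [w1 -> ->] [w2 [->] ->].
Qed.

Lemma run_validity i t v :
  decided proto (run t) i v -> exists j, v = inp j.
Proof.
move=> /decided_done hi; have [W [_ hloc _ _]] := run_Inv t.
by have := hloc i; rewrite hi /= => -[w _ ->]; exists w.
Qed.

End Run.

Lemma proto_consensus : wf_consensus q proto.
Proof.
split => // inp s; split; last split.
- exact: run_agreement.
- exact: run_validity.
- exact: run_decides.
Qed.

End Protocol.

Lemma Sk_sync_account n k (q : tstate n) : in_Sk k q ->
  exists (a : 'I_n) (id : 'I_k -> 'I_n),
  [/\ injective id, 0 < bal q a,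
      (forall i, id i != a -> 0 < alw q a (id i)) &
      (forall i j, i != j -> id i != a -> id j != a ->
         bal q a < alw q a (id i) + alw q a (id j))].
Proof.
move=> /existsP [a /andP [/eqP card_k /andP [bal_pos ut]]].
have mem_sigma p : (p \in sigma q a) = (p == a) || (0 < alw q a p).
  by rewrite /sigma eqn0Ngt bal_pos inE.
pose id (i : 'I_k) : 'I_n := enum_val (cast_ord (esym card_k) i).
have id_sigma i : id i \in sigma q a by apply: enum_valP.
have id_inj : injective id by move=> i j /enum_val_inj /cast_ord_inj.
exists a, id; split => // [i ia|i j ij ia ja].
  by have := id_sigma i; rewrite mem_sigma (negbTE ia).
case/orP: ut => [card_le2|joint]; last first.
  have inD x : x != a -> x \in sigma q a -> x \in sigma q a :\ a.
    by move=> xa xs; rewrite in_setD1 xa xs.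
  move/forallP: joint => /(_ (id i)) /implyP /(_ (inD _ ia (id_sigma i))).
  by move/forallP => /(_ (id j)) /implyP /(_ (inD _ ja (id_sigma j))).
(* With |sigma_q(a)| <= 2 there are no two distinct non-owner spenders. *)
have sub3 : a |: [set id i; id j] \subset sigma q a.
  apply/subsetP => x; rewrite !inE => /orP [|/orP []] /eqP ->;
    by rewrite ?id_sigma // mem_sigma eqxx.
have card3 : #|a |: [set id i; id j]| = 3.
  by rewrite cardsU1 cards2 !inE negb_or eq_sym ia eq_sym ja (inj_eq id_inj) ij.
by have := subset_leq_card sub3; rewrite card3 ltnNge card_le2.
Qed.

Theorem theorem2 (n k : nat) :
  1 <= k <= n ->
  forall q : tstate n, in_Sk k q -> consensus_implementable k q.
Proof.
move=> _ q /Sk_sync_account [a [id [id_inj bal_pos id_enabled id_joint]]].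
exists (phase n), nat, (proto q a id).
exact: proto_consensus id_inj bal_pos id_enabled id_joint.
Qed.
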